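(* Let $p,q$ be $\{\circ,\wedge\}$-terms in the variables $X_1,\dots,X_n$, with $p$ regular and $q$ containing at most one occurrence of $\circ$. For a variety $\mathcal{V}$ the following are equivalent: (1) for every $\mathbf{A}\in\mathcal{V}$ and all compatible reflexive relations $R_1,\dots,R_n$ of $\mathbf{A}$, $p(R_1,\dots,R_n)\subseteq q(R_1,\dots,R_n)$; (2) for every $\mathbf{A}\in\mathcal{V}$ and all congruences $\alpha_1,\dots,\alpha_n$ of $\mathbf{A}$, $p(\alpha_1,\dots,\alpha_n)\subseteq q(\alpha_1,\dots,\alpha_n)$.
   Context: $\wedge$ is interpreted as intersection and $\circ$ as relational composition. A compatible reflexive relation of $\mathbf{A}$ is a reflexive subuniverse of $\mathbf{A}^2$. Regular terms: for a $\{\circ,\wedge\}$-term define $L_X=R_X=\{X\}$ for a variable $X$, $L_{q\circ r}=L_q$, $R_{q\circ r}=R_r$, $L_{q\wedge r}=L_q\cup L_r$, $R_{q\wedge r}=R_q\cup R_r$. The class of regular terms is the smallest class of $\{\circ,\wedge\}$-terms containing all variables, containing $q\circ r$ whenever $q,r$ are regular and $R_q\cap L_r=\emptyset$, and containing $q\wedge r$ whenever $q,r$ are regular, $L_q\cap L_r=\emptyset$ and $R_q\cap R_r=\emptyset$. *)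

From mathcomp Require Import all_boot.
Set Implicit Arguments. Unset Strict Implicit. Unset Printing Implicit Defensive.

Record signature := Signature { op_sym : Type; arity : op_sym -> nat }.

Record algebra (S : signature) := Algebra {
  carrier :> Type;
  interp : forall f : op_sym S, ('I_(arity f) -> carrier) -> carrier }.

Inductive term (S : signature) (V : Type) : Type :=
  | Var : V -> term S V
  | App : forall f : op_sym S, ('I_(arity f) -> term S V) -> term S V.

Fixpoint eval_term (S : signature) (V : Type) (A : algebra S) (v : V -> A)
    (t : term S V) {struct t} : A :=
  match t with
  | Var x => v x
  | App f ts => @interp S A f (fun i => @eval_term S V A v (ts i))
  end.

Definition identity (S : signature) := (term S nat * term S nat)%type.

(* A variety is an equational class: given by a set E of identities,
   its members are the algebras satisfying every identity of E. *)
Definition in_variety (S : signature) (E : identity S -> Prop) (A : algebra S) : Prop :=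
  forall e, E e -> forall v : nat -> A, @eval_term S nat A v e.1 = @eval_term S nat A v e.2.

Definition brel (T : Type) := T -> T -> Prop.

Definition rel_reflexive (T : Type) (R : brel T) : Prop := forall x, R x x.

Definition compatible (S : signature) (A : algebra S) (R : brel A) : Prop :=
  forall (f : op_sym S) (a b : 'I_(arity f) -> A),
    (forall i, R (a i) (b i)) -> R (@interp S A f a) (@interp S A f b).

Definition compatible_reflexive (S : signature) (A : algebra S) (R : brel A) : Prop :=
  rel_reflexive R /\ compatible R.

Definition congruence (S : signature) (A : algebra S) (R : brel A) : Prop :=
  [/\ rel_reflexive R, (forall x y, R x y -> R y x),
      (forall x y z, R x y -> R y z -> R x z) & compatible R].

Inductive cmterm (n : nat) : Type :=
  | CVar : 'I_n -> cmterm n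
  | CComp : cmterm n -> cmterm n -> cmterm n
  | CMeet : cmterm n -> cmterm n -> cmterm n.

Definition rcomp (T : Type) (R1 R2 : brel T) : brel T :=
  fun x y => exists z, R1 x z /\ R2 z y.

Definition rmeet (T : Type) (R1 R2 : brel T) : brel T :=
  fun x y => R1 x y /\ R2 x y.

Fixpoint cm_eval (n : nat) (T : Type) (Rs : 'I_n -> brel T) (t : cmterm n) : brel T :=
  match t with
  | CVar i => Rs i
  | CComp q r => rcomp (cm_eval Rs q) (cm_eval Rs r)
  | CMeet q r => rmeet (cm_eval Rs q) (cm_eval Rs r)
  end.

Fixpoint Lvars (n : nat) (t : cmterm n) : 'I_n -> Prop :=
  match t with
  | CVar i => fun j => j = i
  | CComp q _ => Lvars q
  | CMeet q r => fun j => Lvars q j \/ Lvars r j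
  end.

Fixpoint Rvars (n : nat) (t : cmterm n) : 'I_n -> Prop :=
  match t with
  | CVar i => fun j => j = i
  | CComp _ r => Rvars r
  | CMeet q r => fun j => Rvars q j \/ Rvars r j
  end.

Definition disjoint_vars (n : nat) (P Q : 'I_n -> Prop) : Prop :=
  forall j, ~ (P j /\ Q j).

Inductive regular (n : nat) : cmterm n -> Prop :=
  | reg_var : forall i, regular (CVar i)
  | reg_comp : forall q r, regular q -> regular r ->
      disjoint_vars (Rvars q) (Lvars r) -> regular (CComp q r)
  | reg_meet : forall q r, regular q -> regular r ->
      disjoint_vars (Lvars q) (Lvars r) -> disjoint_vars (Rvars q) (Rvars r) ->
      regular (CMeet q r).

Fixpoint num_comp (n : nat) (t : cmterm n) : nat :=
  match t with
  | CVar _ => 0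
  | CComp q r => (num_comp q + num_comp r).+1
  | CMeet q r => num_comp q + num_comp r
  end.

From mathcomp Require Import all_boot.
From Stdlib Require Import FunctionalExtensionality ProofIrrelevance.

(* Congruences are compatible reflexive
   relations, which gives one direction.  For the other, given compatible
   reflexive relations R_1, ..., R_n on A, we build a "fan" algebra F: the
   subalgebra of A^D, where D consists of a centre and a left and a right
   coordinate for every index j, formed by the tuples whose j-th left
   coordinate is R_j-related to the centre and the centre to the j-th right
   coordinate.  F lies in the variety, being a subalgebra of a power of A, and
   alpha_j, the kernel of the projection onto the two j-coordinates, is a
   congruence of F.  Regularity of p lets every pair x p(R) y be lifted to a
   pair of tuples related by p(alpha) with centres x and y (regular_liftable);
   conversely, since q has at most one composition, q(alpha) between suitably
   "flat" tuples descends to q(R) between their centres (descend). *)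

Set Implicit Arguments.
Unset Strict Implicit.
Unset Printing Implicit Defensive.

Lemma congruence_compatible_reflexive (S : signature) (A : algebra S)
    (R : brel A) :
  congruence R -> compatible_reflexive R.
Proof. by case. Qed.

(* Boolean versions of the sets L_t and R_t of leftmost and rightmost
   variables; they are needed to define tuples by cases on membership. *)
Fixpoint lvarsb (n : nat) (t : cmterm n) : 'I_n -> bool :=
  match t with
  | CVar i => fun j => j == i
  | CComp q _ => lvarsb q
  | CMeet q r => fun j => lvarsb q j || lvarsb r j
  end.

Fixpoint rvarsb (n : nat) (t : cmterm n) : 'I_n -> bool :=
  match t with
  | CVar i => fun j => j == i
  | CComp _ r => rvarsb r
  | CMeet q r => fun j => rvarsb q j || rvarsb r j
  end.

Lemma lvarsP (n : nat) (t : cmterm n) (j : 'I_n) :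
  reflect (Lvars t j) (lvarsb t j).
Proof.
elim: t => [i | q IHq r _ | q IHq r IHr] //=; first exact: eqP.
by apply: (iffP orP) => -[/IHq | /IHr]; auto.
Qed.

Lemma rvarsP (n : nat) (t : cmterm n) (j : 'I_n) :
  reflect (Rvars t j) (rvarsb t j).
Proof.
elim: t => [i | q _ r IHr | q IHq r IHr] //=; first exact: eqP.
by apply: (iffP orP) => -[/IHq | /IHr]; auto.
Qed.

Lemma disjoint_vars_sym (n : nat) (P Q : 'I_n -> Prop) :
  disjoint_vars P Q -> disjoint_vars Q P.
Proof. by move=> dPQ j [Qj Pj]; apply: (dPQ j). Qed.

Lemma disjoint_varsb (n : nat) (P Q : 'I_n -> Prop) (p q : 'I_n -> bool) j :
  disjoint_vars P Q -> (forall j, reflect (P j) (p j)) ->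
  (forall j, reflect (Q j) (q j)) -> p j -> q j = false.
Proof. by move=> dPQ Pp Qq /Pp Pj; apply/Qq => Qj; apply: (dPQ j). Qed.

Section SubPower.
Variables (S : signature) (A : algebra S) (D : Type) (P : (D -> A) -> Prop).
Hypothesis P_closed : forall (o : op_sym S) (a : 'I_(arity o) -> D -> A),
  (forall k, P (a k)) -> P (fun d => @interp _ A o (fun k => a k d)).

Definition sub_power : algebra S :=
  {| carrier := {f : D -> A | P f};
     interp := fun o a => exist P _ (P_closed (fun k => proj2_sig (a k))) |}.

Lemma sub_power_eval (v : nat -> sub_power) (t : term S nat) :
  proj1_sig (eval_term v t) = fun d => eval_term (fun k => proj1_sig (v k) d) t.
Proof.
elim: t => [x | o ts IH] //=; apply: functional_extensionality => d.
by congr (@interp _ _ o _); apply: functional_extensionality => k; rewrite IH.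
Qed.

Lemma sub_power_variety (E : identity S -> Prop) :
  in_variety E A -> in_variety E sub_power.
Proof.
move=> inV e Ee v; apply: eq_sig_hprop => [f|]; first exact: proof_irrelevance.
rewrite !sub_power_eval; apply: functional_extensionality => d; exact: inV.
Qed.

Definition coord_kernel (K : D -> bool) : brel sub_power :=
  fun f g => forall d, K d -> proj1_sig f d = proj1_sig g d.

Lemma coord_kernel_congruence (K : D -> bool) : congruence (coord_kernel K).
Proof.
split=> [f d _ | f g fg d Kd | f g h fg gh d Kd | o a b ab d Kd] //=.
- by rewrite fg.
- by rewrite fg ?gh.
- by congr (@interp _ _ o _); apply: functional_extensionality => k; apply: ab.
Qed.
End SubPower.

Section FanAlgebra.
Variables (S : signature) (A : algebra S) (n : nat) (Rs : 'I_n -> brel A).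
Hypothesis Rs_cr : forall i, compatible_reflexive (Rs i).

Lemma Rs_refl j x : Rs j x x.
Proof. exact: (proj1 (Rs_cr j)). Qed.

(* Coordinates: None is the centre, Some (j, false) and Some (j, true) are the
   left and right j-coordinates. *)
Definition coord := option ('I_n * bool).

Definition fan (f : coord -> A) : Prop := forall j,
  Rs j (f (Some (j, false))) (f None) /\ Rs j (f None) (f (Some (j, true))).

Lemma fan_closed (o : op_sym S) (a : 'I_(arity o) -> coord -> A) :
  (forall k, fan (a k)) -> fan (fun d => @interp _ A o (fun k => a k d)).
Proof.
by move=> fan_a j; split; apply: (proj2 (Rs_cr j)) => k; case: (fan_a k j).
Qed.

Definition fan_alg : algebra S := sub_power fan_closed.

Lemma fan_variety (E : identity S -> Prop) :
  in_variety E A -> in_variety E fan_alg.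
Proof. exact: sub_power_variety. Qed.

Definition alpha (j : 'I_n) : brel fan_alg :=
  coord_kernel (fun d : coord => if d is Some (i, _) then i == j else false).

Lemma alpha_congruence j : congruence (alpha j).
Proof. exact: coord_kernel_congruence. Qed.

Lemma alphaE j (f g : fan_alg) b :
  alpha j f g -> proj1_sig f (Some (j, b)) = proj1_sig g (Some (j, b)).
Proof. by apply; rewrite /= eqxx. Qed.

Definition fan_fun (x : A) (l r : 'I_n -> A) : coord -> A := fun d =>
  match d with None => x | Some (j, false) => l j | Some (j, true) => r j end.

Definition mk_fan (x : A) (l r : 'I_n -> A) (lx : forall j, Rs j (l j) x)
  (xr : forall j, Rs j x (r j)) : fan_alg :=
  exist fan (fan_fun x l r) (fun j => conj (lx j) (xr j)).

Definition left_anchored (t : cmterm n) (x : A) (xR : 'I_n -> A)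
    (f : fan_alg) : Prop :=
  proj1_sig f None = x /\ forall j, lvarsb t j ->
    proj1_sig f (Some (j, false)) = x /\ proj1_sig f (Some (j, true)) = xR j.

Definition right_anchored (t : cmterm n) (y : A) (yL : 'I_n -> A)
    (g : fan_alg) : Prop :=
  proj1_sig g None = y /\ forall j, rvarsb t j ->
    proj1_sig g (Some (j, true)) = y /\ proj1_sig g (Some (j, false)) = yL j.

Definition liftable (t : cmterm n) (x y : A) : Prop :=
  exists xR yL : 'I_n -> A,
  [/\ forall j, Rs j x (xR j), forall j, Rs j (yL j) y &
      forall f g, left_anchored t x xR f -> right_anchored t y yL g ->
        cm_eval alpha t f g].

(* A variable X_i: the right i-coordinate of x is y, the left one of y is x. *)
Lemma liftable_var i x y : Rs i x y -> liftable (CVar i) x y.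
Proof.
move=> xy; exists (fun j => if j == i then y else x),
                   (fun j => if j == i then x else y).
split=> [j | j | f g [_ fL] [_ gR] [[j b]|] //= /eqP -> {j}].
- by case: eqP => [->|_]; [exact: xy | exact: Rs_refl].
- by case: eqP => [->|_]; [exact: xy | exact: Rs_refl].
- have [f0 f1] := fL i (eqxx i); have [g1 g0] := gR i (eqxx i).
  by rewrite eqxx in f1 g0; case: b; rewrite ?f0 ?f1 ?g0 ?g1.
Qed.

(* Composition: the middle element z gets the left coordinates required by
   the rightmost variables of q and the right coordinates required by the
   leftmost variables of r; regularity says these never conflict. *)
Lemma liftable_comp q r x z y : disjoint_vars (Rvars q) (Lvars r) ->
  liftable q x z -> liftable r z y -> liftable (CComp q r) x y.
Proof.
move=> dqr [xR [zL [xxR zLz lift_q]]] [zR [yL [zzR yLy lift_r]]].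
exists xR, yL; split=> // f g f_anch g_anch.
pose zl j := if rvarsb q j then zL j else z.
pose zr j := if lvarsb r j then zR j else z.
have zlz j : Rs j (zl j) z.
  by rewrite /zl; case: ifP => _; [exact: zLz | exact: Rs_refl].
have zzr j : Rs j z (zr j).
  by rewrite /zr; case: ifP => _; [exact: zzR | exact: Rs_refl].
exists (mk_fan zlz zzr); split.
- apply: lift_q => //; split=> // j qj.
  by rewrite /= /zl /zr qj (disjoint_varsb dqr (rvarsP q) (lvarsP r) qj).
- apply: lift_r => //; split=> // j rj.
  by rewrite /= /zl /zr rj (disjoint_varsb (disjoint_vars_sym dqr) (lvarsP r) (rvarsP q) rj).
Qed.

(* Meet: the outer coordinates are taken from the lifting of q on the
   extreme variables of q and from that of r elsewhere; disjointness of the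
   extreme variables of q and r makes both liftings applicable. *)
Lemma liftable_meet q r x y : disjoint_vars (Lvars q) (Lvars r) ->
  disjoint_vars (Rvars q) (Rvars r) ->
  liftable q x y -> liftable r x y -> liftable (CMeet q r) x y.
Proof.
move=> dL dR [xR1 [yL1 [xxR1 yLy1 lift_q]]] [xR2 [yL2 [xxR2 yLy2 lift_r]]].
exists (fun j => if lvarsb q j then xR1 j else xR2 j),
       (fun j => if rvarsb q j then yL1 j else yL2 j).
split=> [j | j | f g [fx fL] [gy gR]]; try by case: ifP.
split.
- apply: lift_q; split=> // j qj.
  + by have := fL j; rewrite /= qj => /(_ isT).
  + by have := gR j; rewrite /= qj => /(_ isT).
- apply: lift_r; split=> // j rj.
  + have := fL j; rewrite /= rj orbT => /(_ isT).
    by rewrite (disjoint_varsb (disjoint_vars_sym dL) (lvarsP r) (lvarsP q) rj).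
  + have := gR j; rewrite /= rj orbT => /(_ isT).
    by rewrite (disjoint_varsb (disjoint_vars_sym dR) (rvarsP r) (rvarsP q) rj).
Qed.

Lemma regular_liftable p x y : regular p -> cm_eval Rs p x y -> liftable p x y.
Proof.
move=> reg_p; elim: reg_p x y => [i | q r _ IHq _ IHr dqr | q r _ IHq _ IHr dL dR]
  x y /=.
- exact: liftable_var.
- by case=> z [xz zy]; apply: liftable_comp dqr (IHq _ _ xz) (IHr _ _ zy).
- by case=> xqy xry; apply: liftable_meet dL dR (IHq _ _ xqy) (IHr _ _ xry).
Qed.

Definition left_flat (f : fan_alg) : Prop :=
  forall j, proj1_sig f (Some (j, false)) = proj1_sig f None.

Definition right_flat (g : fan_alg) : Prop :=
  forall j, proj1_sig g (Some (j, true)) = proj1_sig g None.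

Lemma descend_left (m : cmterm n) (f g : fan_alg) : num_comp m = 0 ->
  left_flat f -> cm_eval alpha m f g ->
  cm_eval Rs m (proj1_sig f None) (proj1_sig g None).
Proof.
elim: m f g => [i | // | q IHq r IHr] f g /=.
- move=> _ f_flat /alphaE fg.
  by rewrite -(f_flat i) (fg false); case: (proj2_sig g i).
- move/eqP; rewrite addn_eq0 => /andP[/eqP q0 /eqP r0] f_flat [fqg frg].
  by split; [apply: IHq | apply: IHr].
Qed.

Lemma descend_right (m : cmterm n) (f g : fan_alg) : num_comp m = 0 ->
  right_flat g -> cm_eval alpha m f g ->
  cm_eval Rs m (proj1_sig f None) (proj1_sig g None).
Proof.
elim: m f g => [i | // | q IHq r IHr] f g /=.
- move=> _ g_flat /alphaE fg.
  by rewrite -(g_flat i) -(fg true); case: (proj2_sig f i).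
- move/eqP; rewrite addn_eq0 => /andP[/eqP q0 /eqP r0] g_flat [fqg frg].
  by split; [apply: IHq | apply: IHr].
Qed.

(* A term with at most one composition descends from alpha to R between a
   left-flat and a right-flat tuple: the single composition splits it into a
   composition-free left and right part. *)
Lemma descend (q : cmterm n) (f g : fan_alg) : (num_comp q <= 1)%N ->
  left_flat f -> right_flat g -> cm_eval alpha q f g ->
  cm_eval Rs q (proj1_sig f None) (proj1_sig g None).
Proof.
elim: q f g => [i | q _ r _ | q IHq r IHr] f g /= q1 f_flat g_flat.
- exact: (@descend_left (CVar i)).
- rewrite ltnS leqn0 addn_eq0 in q1; case/andP: q1 => /eqP q0 /eqP r0.
  case=> h [fh hg]; exists (proj1_sig h None).
  by split; [apply: descend_left | apply: descend_right].
- case=> fqg frg; split; [apply: IHq | apply: IHr] => //.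
  + exact: leq_trans (leq_addr _ _) q1.
  + exact: leq_trans (leq_addl _ _) q1.
Qed.
End FanAlgebra.

Theorem theorem5p1 (S : signature) (E : identity S -> Prop) (n : nat)
    (p q : cmterm n) :
  regular p -> (num_comp q <= 1)%N ->
  ((forall (A : algebra S), in_variety E A ->
      forall Rs : 'I_n -> brel A, (forall i, compatible_reflexive (Rs i)) ->
      forall x y : A, cm_eval Rs p x y -> cm_eval Rs q x y)
   <->
   (forall (A : algebra S), in_variety E A ->
      forall alphas : 'I_n -> brel A, (forall i, congruence (alphas i)) ->
      forall x y : A, cm_eval alphas p x y -> cm_eval alphas q x y)).
Proof.
move=> p_reg q_comp.
split=> [incl_cr A inV alphas alphas_cong | incl_cong A inV Rs Rs_cr] x y pxy.
  by apply: incl_cr => // i; apply: congruence_compatible_reflexive.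
have [xR [yL [xxR yLy lift]]] := regular_liftable Rs_cr p_reg pxy.
pose f := mk_fan Rs_cr (fun j => Rs_refl Rs_cr j x) xxR.
pose g := mk_fan Rs_cr yLy (fun j => Rs_refl Rs_cr j y).
have f_anch : left_anchored p x xR f by [].
have g_anch : right_anchored p y yL g by [].
have fg := incl_cong _ (fan_variety (Rs_cr := Rs_cr) inV) _ (alpha_congruence Rs_cr)
  f g (lift f g f_anch g_anch).
have f_flat : left_flat f by [].
have g_flat : right_flat g by [].
exact: descend q_comp f_flat g_flat fg.
Qed.
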